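(* Let $N\ge2$, $\sigma\in S_N$, and write $\sigma=T_{a_n}\cdots T_{a_1}$ as a product of simple transpositions. Let $\mathbf{A}_\sigma=\mathbf{T}_{a_n}\cdots\mathbf{T}_{a_1}$ be the associated $2^N\times 2^N$ matrix. Then for each $k=0,1,\dots,N$, \[ [\mathbf{A}_\sigma]_{h_k,h_k}=\operatorname{sgn}(\sigma)\prod_{j=1}^{k}\Big(\frac{1-\xi_j}{1-\xi_{\sigma(j)}}\Big)^{j-1}\prod_{j=k+1}^{N}\Big(\frac{1-\xi_j}{1-\xi_{\sigma(j)}}\Big)^{j-2}. \]
   Context: $\xi_1,\dots,\xi_N$ are complex variables different from $1$. For $l=1,\dots,N-1$, $T_l$ acts on $\sigma\in S_N$ (viewed as the word $(\sigma(1)\cdots\sigma(N))$) by $(T_l\sigma)(l)=\sigma(l+1)$, $(T_l\sigma)(l+1)=\sigma(l)$, $(T_l\sigma)(j)=\sigma(j)$ otherwise. $\mathbf{S}_{\beta\alpha}$ is the $4\times4$ matrix with rows $\big(-\tfrac{1-\xi_\beta}{1-\xi_\alpha},0,0,0\big)$, $\big(0,-\tfrac{1-\xi_\beta}{1-\xi_\alpha},\tfrac{\xi_\beta-\xi_\alpha}{1-\xi_\alpha},0\big)$, $(0,0,-1,0)$, $\big(0,0,0,-\tfrac{1-\xi_\beta}{1-\xi_\alpha}\big)$, and $\mathbf{T}_l(\alpha,\beta)=\mathbf{I}_2^{\otimes(l-1)}\otimes\mathbf{S}_{\beta\alpha}\otimes\mathbf{I}_2^{\otimes(N-l-1)}$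 (Kronecker products). In the product $\mathbf{A}_\sigma=\mathbf{T}_{a_n}\cdots\mathbf{T}_{a_1}$, the factor $\mathbf{T}_{a_i}$ means $\mathbf{T}_{a_i}(\alpha,\beta)$ where, with $\sigma_{i-1}=T_{a_{i-1}}\cdots T_{a_1}$ ($\sigma_0$ the identity), $\alpha=\sigma_{i-1}(a_i)$ and $\beta=\sigma_{i-1}(a_i+1)$ (i.e., $T_{a_i}$ turns the word $(\cdots\alpha\beta\cdots)$ into $(\cdots\beta\alpha\cdots)$). (The matrix $\mathbf{A}_\sigma$ is independent of the chosen decomposition.) $h_k=2^{N-1}+\dots+2^{N-k}+1$ for $1\le k\le N$, $h_0=1$. *)

From HB Require Import structures.
From mathcomp Require Import all_boot all_order all_algebra all_fingroup.
Set Implicit Arguments. Unset Strict Implicit. Unset Printing Implicit Defensive.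
Import Order.TTheory GRing.Theory Num.Theory.
Local Open Scope ring_scope.

(* Kronecker product: row index of A (x) B is i1 * m2 + i2 (first factor most
   significant), entry A i1 j1 * B i2 j2. *)
Lemma kron_divP m1 m2 (i : 'I_(m1 * m2)) : (i %/ m2 < m1)%N.
Proof.
case: m2 i => [|m2] i; first by case: i => i; rewrite muln0.
by rewrite ltn_divLR // ltn_ord.
Qed.

Lemma kron_modP m1 m2 (i : 'I_(m1 * m2)) : (i %% m2 < m2)%N.
Proof.
case: m2 i => [|m2] i; first by case: i => i; rewrite muln0.
by rewrite ltn_pmod.
Qed.

Definition kron (R : ringType) m1 n1 m2 n2 (A : 'M[R]_(m1, n1)) (B : 'M[R]_(m2, n2))
  : 'M[R]_(m1 * m2, n1 * n2) :=
  \matrix_(i, j) (A (Ordinal (kron_divP i)) (Ordinal (kron_divP j))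
                  * B (Ordinal (kron_modP i)) (Ordinal (kron_modP j))).

Section Defs.
Variables (F : fieldType) (N : nat) (xi : 'I_N -> F).

(* Positions are 0-based: the simple transposition T_l of the paper (1 <= l <= N-1)
   is represented by the position l-1 : 'I_N; nextpos gives position l (0-based). *)
Definition nextpos (l : 'I_N) : 'I_N := insubd l l.+1.

(* T_l acting on a word p (p j = letter at position j): swaps positions l, l+1. *)
Definition swapw (l : 'I_N) (p : 'S_N) : 'S_N := tperm l (nextpos l) * p.

(* sigma = T_{a_n} ... T_{a_1} applied to the identity word. *)
Fixpoint wordp (p : 'S_N) (a : seq 'I_N) : 'S_N :=
  if a is l :: a' then wordp (swapw l p) a' else p.

Definition Sba (b a : 'I_N) : 'M[F]_4 :=
  \matrix_(i < 4, j < 4)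
    match val i, val j with
    | 0, 0 | 1, 1 | 3, 3 => - ((1 - xi b) / (1 - xi a))
    | 1, 2 => (xi b - xi a) / (1 - xi a)
    | 2, 2 => -1
    | _, _ => 0
    end.

(* T_l(alpha, beta) = I_2^{(x)(l-1)} (x) S_{beta alpha} (x) I_2^{(x)(N-l-1)}
   (l 0-based here, so the factors are 2^l, 4, 2^(N-l-2)); conform_mx only
   serves to view this 2^l*4*2^(N-l-2) matrix as a 2^N matrix (dimensions agree
   for every valid l, i.e. l.+1 < N). *)
Definition Tmat (l a b : 'I_N) : 'M[F]_(2 ^ N) :=
  conform_mx (0 : 'M[F]_(2 ^ N))
    (kron (kron (1%:M : 'M[F]_(2 ^ l)) (Sba b a)) (1%:M : 'M[F]_(2 ^ (N - l.+2)))).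

(* A = T_{a_n} ... T_{a_1}, with T_{a_i} = T_{a_i}(sigma_{i-1}(a_i), sigma_{i-1}(a_i+1)). *)
Fixpoint Aaux (p : 'S_N) (a : seq 'I_N) : 'M[F]_(2 ^ N) :=
  if a is l :: a' then Aaux (swapw l p) a' *m Tmat l (p l) (p (nextpos l))
  else 1%:M.

Definition Amat (a : seq 'I_N) : 'M[F]_(2 ^ N) := Aaux 1 a.

End Defs.

Lemma pow2_gt0 N : (0 < 2 ^ N)%N.
Proof. by rewrite expn_gt0. Qed.

(* 0-based version of h_k: h_k - 1 = 2^(N-1) + ... + 2^(N-k). *)
Definition hidx (N k : nat) : 'I_(2 ^ N) :=
  insubd (Ordinal (pow2_gt0 N)) (\sum_(i < k) 2 ^ (N - i.+1))%N.

(* Every T_l(alpha, beta) is upper triangular in the binary order of the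
   indices, so the diagonal of A_sigma is the product of the diagonals of its
   factors.  The index h_k - 1 = 2^N - 2^(N-k) has ones exactly in its k
   leading binary digits, hence the diagonal entry of T_l(alpha, beta) at h_k
   is -1 if l = k and -(1 - xi_beta) / (1 - xi_alpha) otherwise.  Setting
   G(p) = prod_j (1 - xi_{p(j)})^(e_j) with e_j = j - 1 for j <= k and j - 2
   beyond, each factor T_{a_i} multiplies G(sigma_i) into -G(sigma_{i-1}), so
   the product telescopes to (-1)^n G(id) / G(sigma), and (-1)^n = sgn sigma. *)
From HB Require Import structures.
From mathcomp Require Import all_boot all_order all_algebra all_fingroup.
From mathcomp Require Import zify ring.
Import Order.TTheory GRing.Theory Num.Theory.

Set Implicit Arguments. Unset Strict Implicit. Unset Printing Implicit Defensive.

Section BinaryDigits.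
Local Open Scope nat_scope.

(* The base-4 digit at position 2^m of 2^n - 2^j: its bits are those of
   positions m and m+1, and 2^n - 2^j has ones exactly at positions j .. n-1. *)
Lemma sub_pow2_digit n j m : j <= n -> m.+2 <= n ->
  (2 ^ n - 2 ^ j) %/ 2 ^ m %% 4 = (j <= m) + (j <= m.+1).*2.
Proof.
move=> jn mn.
have -> : 2 ^ n = 2 ^ (n - m.+2) * 4 * 2 ^ m.
  by rewrite -[4]/(2 ^ 2) -!expnD; congr expn; lia.
have c0 : 0 < 2 ^ (n - m.+2) by rewrite expn_gt0.
have M0 : 0 < 2 ^ m by rewrite expn_gt0.
move: c0 M0; set c := 2 ^ (n - m.+2); set M := 2 ^ m => c0 M0.
case: (leqP j m) => [jm | mj].
  have JM : 2 ^ j <= M by rewrite leq_pexp2l.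
  have -> : c * 4 * M - 2 ^ j = (c * 4 - 1) * M + (M - 2 ^ j) by nia.
  rewrite divnMDl // divn_small ?addn0 ?(leqW jm); lia.
have -> : 2 ^ j = 2 ^ (j - m) * M by rewrite -expnD subnK // ltnW.
rewrite -mulnBl mulnK //.
case: (eqVneq j m.+1) => [-> | jm1]; first by rewrite subSnn leqnn; lia.
have -> : 2 ^ (j - m) = 2 ^ (j - m.+2) * 4.
  by rewrite -[4]/(2 ^ 2) -expnD; congr expn; lia.
by rewrite -mulnBl modnMl; lia.
Qed.

Lemma sum_pow2_desc N k : k <= N ->
  \sum_(i < k) 2 ^ (N - i.+1) + 2 ^ (N - k) = 2 ^ N.
Proof.
elim: k => [|k IH] hk; first by rewrite big_ord0 subn0.
rewrite big_ord_recr /= -addnA -{}IH 1?ltnW //; congr (_ + _).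
by rewrite addnn -mul2n -expnS; congr expn; lia.
Qed.

Lemma hidxE N k : k <= N -> val (hidx N k) = 2 ^ N - 2 ^ (N - k).
Proof.
move=> hk; rewrite /hidx val_insubd.
have -> : \sum_(i < k) 2 ^ (N - i.+1) = 2 ^ N - 2 ^ (N - k).
  by rewrite -(sum_pow2_desc hk) addnK.
by rewrite ltn_subrL !expn_gt0.
Qed.

End BinaryDigits.

Local Open Scope ring_scope.

Section UpperTriangular.
Variable R : pzRingType.

Definition upper_trig n (M : 'M[R]_n) := forall i j : 'I_n, (j < i)%N -> M i j = 0.

Lemma upper_trig1 n : upper_trig (1%:M : 'M[R]_n).
Proof. by move=> i j ji; rewrite mxE -val_eqE gtn_eqF. Qed.

Lemma upper_trig_mul n (A B : 'M[R]_n) :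
  upper_trig A -> upper_trig B -> upper_trig (A *m B).
Proof.
move=> uA uB i j ji; rewrite mxE big1 // => t _.
case: (ltnP t i) => ti; first by rewrite uA ?mul0r.
by rewrite uB ?mulr0 // (leq_trans ji ti).
Qed.

Lemma mulmx_upper_trig_diag n (A B : 'M[R]_n) i :
  upper_trig A -> upper_trig B -> (A *m B) i i = A i i * B i i.
Proof.
move=> uA uB; rewrite mxE (bigD1 i) //= big1 ?addr0 // => t /negPf ti.
case: (ltngtP t i) => [lt|gt|/val_inj eq]; first by rewrite uA ?mul0r.
  by rewrite uB ?mulr0.
by rewrite eq eqxx in ti.
Qed.

End UpperTriangular.

Section TransferMatrices.
Variables (F : fieldType) (N : nat) (xi : 'I_N -> F).

Definition Sba_entry (b a : 'I_N) (x y : nat) : F :=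
  match x, y with
  | 0, 0 | 1, 1 | 3, 3 => - ((1 - xi b) / (1 - xi a))
  | 1, 2 => (xi b - xi a) / (1 - xi a)
  | 2, 2 => -1
  | _, _ => 0
  end.

Lemma Sba_entry_lower b a x y : (x < 4)%N -> (y < x)%N -> Sba_entry b a x y = 0.
Proof. by case: x => [|[|[|[|x]]]] //; case: y => [|[|[|y]]]. Qed.

(* Row i of the middle Kronecker factor is the base-4 digit of i at 2^(N-l-2). *)
Lemma TmatE (l a b : 'I_N) (i j : 'I_(2 ^ N)) : (l.+1 < N)%N ->
  let m := (2 ^ (N - l.+2))%N in
  Tmat xi l a b i j =
    (i %/ m %/ 4 == j %/ m %/ 4)%N%:R * Sba_entry b a (i %/ m %% 4) (j %/ m %% 4)
    * (i %% m == j %% m)%N%:R.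
Proof.
move=> hl m; rewrite /Tmat /conform_mx; case: eqP => [e|[]]; last first.
  by rewrite -[4%N]/(2 ^ 2)%N -!expnD; congr (expn _ _); lia.
by rewrite castmxE !mxE.
Qed.

Lemma Tmat_upper_trig (l a b : 'I_N) : (l.+1 < N)%N -> upper_trig (Tmat xi l a b).
Proof.
move=> hl i j ji; rewrite TmatE //.
set m := (2 ^ (N - l.+2))%N.
have m0 : (0 < m)%N by rewrite expn_gt0.
have [E1|] := eqVneq (i %/ m %/ 4)%N (j %/ m %/ 4)%N; last by rewrite !mul0r.
have [E2|] := eqVneq (i %% m)%N (j %% m)%N; last by rewrite mulr0.
rewrite Sba_entry_lower ?mulr0 ?mul0r ?ltn_mod // ltnNge; apply: contraL ji => le.
have qle : (i %/ m <= j %/ m)%N.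
  by rewrite (divn_eq (i %/ m) 4) (divn_eq (j %/ m) 4) E1 leq_add2l.
by rewrite -leqNgt (divn_eq i m) (divn_eq j m) E2 leq_add2r leq_mul2r qle orbT.
Qed.

Lemma Aaux_upper_trig (p : 'S_N) a :
  all (fun l : 'I_N => (l.+1 < N)%N) a -> upper_trig (Aaux xi p a).
Proof.
elim: a p => [|l a IH] p /=; first by move=> _; apply: upper_trig1.
by case/andP=> hl ha; apply: upper_trig_mul; [apply: IH | apply: Tmat_upper_trig].
Qed.

Lemma nextposE (l : 'I_N) : (l.+1 < N)%N -> nat_of_ord (nextpos l) = l.+1.
Proof. by move=> hl; rewrite /nextpos val_insubd hl. Qed.

Lemma Tmat_hidx_diag (l a b : 'I_N) k : (l.+1 < N)%N -> (k <= N)%N ->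
  Tmat xi l a b (hidx N k) (hidx N k) =
    if l.+1 == k then -1 else - ((1 - xi b) / (1 - xi a)).
Proof.
move=> hl hk; rewrite TmatE // !eqxx mulr1 mul1r hidxE //.
rewrite sub_pow2_digit ?leq_subr //; last by lia.
have -> : (N - k <= N - l.+2)%N = (l.+2 <= k)%N by lia.
have -> : (N - k <= (N - l.+2).+1)%N = (l.+1 <= k)%N by lia.
by case: ltngtP.
Qed.

Section Telescoping.
Variable k : nat.
Hypothesis hk : (k <= N)%N.
Hypothesis hxi : forall i, xi i != 1.

(* 0-based version of the exponents j-1 (j <= k) and j-2 (j > k) of the paper. *)
Definition weight_exp (j : nat) : int := if (j < k)%N then j%:Z else j%:Z - 1.

Definition weight (p : 'S_N) : F := \prod_(j < N) (1 - xi (p j)) ^ weight_exp j.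

Lemma subr1_xi_neq0 i : 1 - xi i != 0.
Proof. by rewrite subr_eq0 eq_sym hxi. Qed.

Lemma weight_neq0 p : weight p != 0.
Proof. by apply/prodf_neq0 => j _; rewrite expfz_neq0 // subr1_xi_neq0. Qed.

Lemma weight_swapw (l : 'I_N) (p : 'S_N) : (l.+1 < N)%N ->
  Tmat xi l (p l) (p (nextpos l)) (hidx N k) (hidx N k) * weight (swapw l p)
  = - weight p.
Proof.
move=> hl; rewrite Tmat_hidx_diag //.
set l' := nextpos l; have hl' : nat_of_ord l' = l.+1 by apply: nextposE.
have ll' : l != l' by rewrite -val_eqE /= hl' neq_ltn ltnSn.
have weightE q : weight q = (1 - xi (q l)) ^ weight_exp l *
    ((1 - xi (q l')) ^ weight_exp l' *
     \prod_(i < N | (i != l) && (i != l')) (1 - xi (q i)) ^ weight_exp i).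
  by rewrite /weight (bigD1 l) // (bigD1 l') 1?eq_sym.
rewrite !weightE /swapw !permM tpermL tpermR.
under eq_bigr => i /andP[il il'] do rewrite permM tpermD 1?eq_sym //.
set rest := \prod_(i < N | _) _; rewrite hl' /weight_exp.
have u0 := subr1_xi_neq0 (p l); have v0 := subr1_xi_neq0 (p l').
move: u0 v0; set u := 1 - xi (p l); set v := 1 - xi (p l') => u0 v0.
have lS : (l.+1)%:Z = l%:Z + 1 by rewrite -addn1 PoszD.
case: (ltngtP l.+1 k) => [lk|kl|_] /=.
- by rewrite lS !expfzDr // !expr1z; field.
- by rewrite lS addrK !expfzDr // ?expr1z !exprN1; field; rewrite u0 v0.
- by rewrite lS addrK; ring.
Qed.

Lemma Aaux_hidx_diag (p : 'S_N) a : all (fun l : 'I_N => (l.+1 < N)%N) a ->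
  Aaux xi p a (hidx N k) (hidx N k) * weight (wordp p a) = (-1) ^+ size a * weight p.
Proof.
elim: a p => [|l a IH] p /=; first by rewrite mxE eqxx mulr1n expr0 !mul1r.
case/andP=> hl ha.
rewrite mulmx_upper_trig_diag; [|exact: Aaux_upper_trig|exact: Tmat_upper_trig].
by rewrite mulrAC IH // -mulrA [weight _ * _]mulrC weight_swapw // exprS; ring.
Qed.

End Telescoping.

Lemma weight1_div_weight k (sigma : 'S_N) :
  weight k 1 / weight k sigma =
    (\prod_(j < N | (j < k)%N) ((1 - xi j) / (1 - xi (sigma j))) ^ (j%:Z))
    * (\prod_(j < N | (k <= j)%N) ((1 - xi j) / (1 - xi (sigma j))) ^ (j%:Z - 1)).
Proof.
rewrite /weight (bigID (fun j : 'I_N => (j < k)%N)) /=.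
rewrite [X in _ / X](bigID (fun j : 'I_N => (j < k)%N)) /= invfM mulrACA.
under [X in _ = _ * X]eq_bigl => j do rewrite leqNgt.
congr (_ * _); rewrite -prodfV -big_split /=; apply: eq_bigr => j hj;
  rewrite perm1 /weight_exp ?(negbTE hj) ?hj expfzMl exprz_inv invr_expz //.
Qed.

Lemma odd_wordp (p : 'S_N) a : all (fun l : 'I_N => (l.+1 < N)%N) a ->
  odd_perm (wordp p a) = odd_perm p (+) odd (size a).
Proof.
elim: a p => [|l a IH] p /=; first by rewrite addbF.
case/andP=> hl ha; rewrite IH // /swapw odd_permM odd_tperm.
have -> : (l != nextpos l) by rewrite -val_eqE /= nextposE // neq_ltn ltnSn.
by case: (odd_perm p); case: (odd (size a)).
Qed.

End TransferMatrices.

Theorem lemma2p2 (F : fieldType) (N : nat) (xi : 'I_N -> F)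
    (hxi : forall i, xi i != 1) (hN : (2 <= N)%N)
    (sigma : 'S_N) (a : seq 'I_N)
    (ha : all (fun l : 'I_N => (l.+1 < N)%N) a)
    (hsigma : wordp 1 a = sigma)
    (k : 'I_N.+1) :
  Amat xi a (hidx N k) (hidx N k) =
    (-1) ^+ odd_perm sigma
    * (\prod_(j < N | (j < k)%N) ((1 - xi j) / (1 - xi (sigma j))) ^ (j%:Z))
    * (\prod_(j < N | (k <= j)%N) ((1 - xi j) / (1 - xi (sigma j))) ^ (j%:Z - 1)).
Proof.
have hk : (k <= N)%N by rewrite -ltnS ltn_ord.
have diag := Aaux_hidx_diag hk hxi 1 ha; rewrite hsigma in diag.
have sign : odd (size a) = odd_perm sigma.
  by rewrite -hsigma odd_wordp // odd_perm1.
rewrite /Amat -[LHS](mulfK (weight_neq0 k hxi sigma)) diag -signr_odd sign.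
by rewrite -!mulrA weight1_div_weight.
Qed.
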